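(* Let $d_1,d_2,b_1,b_2$ be integers with $2\leq b_i\leq d_i/2$ for $i=1,2$. For $i=1,2$ let $T_i\in S^{d_i}\mathbb{C}^2$ be a binary form with cactus rank $c_{d_i}(T_i)=b_i$ and $[T_i]\in\langle\nu_{d_i}(Z[b_i])\rangle$, and let $T=T_1\otimes T_2$. Then $R_{d_1,d_2}(T)\leq d_1b_2+d_2b_1+b_1b_2-1$.
   Context: Identify $S^d\mathbb{C}^2$ with binary forms of degree $d$ in a basis $\{x,y\}$, with dual coordinates $\partial_x,\partial_y$. For $b\geq1$, $Z[b]\subseteq\mathbb{P}^1$ is the zero-dimensional scheme of degree $b$ supported at $[x]$, with ideal $(\partial_y^b)$. $\nu_d:\mathbb{P}^1\to\mathbb{P}(S^d\mathbb{C}^2)$, $[v]\mapsto[v^d]$, is the Veronese embedding; $\langle Y\rangle$ denotes linear span of a subscheme. The cactus rank $c_d(f)$ is the minimal degree of a zero-dimensional scheme $A\subseteq\mathbb{P}^1$ with $[f]\in\langle\nu_d(A)\rangle$. The partially symmetric rank $R_{d_1,d_2}(T)$ is the minimal $r$ with $T=\sum_{i=1}^r v_{i,1}^{\otimes d_1}\otimes v_{i,2}^{\otimes d_2}$, $v_{i,j}\in\mathbb{C}^2$. *)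

From HB Require Import structures.
From mathcomp Require Import all_boot all_order all_algebra.
From mathcomp Require Import reals.
From mathcomp Require Import complex.
From mathcomp Require Import mpoly.
Import GRing.Theory.

Set Implicit Arguments.
Unset Strict Implicit.
Unset Printing Implicit Defensive.

Local Open Scope ring_scope.

(* Binary forms of degree d over a field F: homogeneous elements of degree d of
   {mpoly F[2]}, variables 'X_0 = x and 'X_1 = y.  Forms in the dual
   coordinates (partial_x, partial_y) are represented by the same type, with
   'X_0 = partial_x and 'X_1 = partial_y. *)

Section BinaryForms.
Variable F : fieldType.

Definition vx : {mpoly F[2]} := 'X_(@inord 1 0).
Definition vy : {mpoly F[2]} := 'X_(@inord 1 1).

Definition apolar (g f : {mpoly F[2]}) : {mpoly F[2]} :=
  \sum_(m <- msupp g) g@_m *: f^`M[m].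

(* A zero-dimensional subscheme A of P^1 of degree b is given by its (principal,
   saturated) homogeneous ideal (g), with g a nonzero binary form of degree b in
   the dual coordinates.  [f] lies in the linear span <nu_d(A)> iff f is
   annihilated (under the apolarity pairing S^d(C^2)^* x S^d C^2 -> C) by every
   element of the degree-d part (I_A)_d = { g*q homogeneous of degree d }. *)
Definition in_scheme_span (d : nat) (g f : {mpoly F[2]}) : Prop :=
  forall q : {mpoly F[2]}, g * q \is d.-homog -> apolar (g * q) f = 0.

Definition scheme_gen (b : nat) (g : {mpoly F[2]}) : Prop :=
  g != 0 /\ g \is b.-homog.

(* Z[b]: degree-b scheme supported at [x], ideal (partial_y ^ b) *)
Definition Zgen (b : nat) : {mpoly F[2]} := vy ^+ b.

Definition cactus_rank_eq (d : nat) (f : {mpoly F[2]}) (b : nat) : Prop :=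
  (exists g, scheme_gen b g /\ in_scheme_span d g f) /\
  (forall (b' : nat) g, scheme_gen b' g -> in_scheme_span d g f -> (b <= b')%N).

(* S^{d1} C^2 (x) S^{d2} C^2 as bihomogeneous forms in x1,y1,x2,y2
   ('X_0,'X_1,'X_2,'X_3 of {mpoly F[4]}). *)
Definition v4 (k : nat) : {mpoly F[4]} := 'X_(@inord 3 k).

Definition embed1 (p : {mpoly F[2]}) : {mpoly F[4]} :=
  p \mPo [tuple v4 0; v4 1].
Definition embed2 (p : {mpoly F[2]}) : {mpoly F[4]} :=
  p \mPo [tuple v4 2; v4 3].

Definition tens (p q : {mpoly F[2]}) : {mpoly F[4]} := embed1 p * embed2 q.

(* T = sum_{i<r} v_{i,1}^{(x) d1} (x) v_{i,2}^{(x) d2}, where v^{(x) d} with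
   v = (a,b) corresponds to the form (a x + b y)^d. *)
Definition psym_decomp (d1 d2 r : nat) (T : {mpoly F[4]}) : Prop :=
  exists a b c e : 'I_r -> F,
    T = \sum_(i < r) (a i *: v4 0 + b i *: v4 1) ^+ d1
                     * (c i *: v4 2 + e i *: v4 3) ^+ d2.

Definition psym_rank_le (d1 d2 : nat) (T : {mpoly F[4]}) (N : nat) : Prop :=
  exists r, (r <= N)%N /\ psym_decomp d1 d2 r T.

End BinaryForms.

From mathcomp Require Import all_boot all_order all_algebra.
From mathcomp Require Import cyclic separable cyclotomic.
From mathcomp Require Import reals complex mpoly.
From mathcomp Require Import zify ring.
Import GRing.Theory Num.Theory.

Set Implicit Arguments.
Unset Strict Implicit.
Unset Printing Implicit Defensive.

Local Open Scope ring_scope.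

(* Since T1 is apolar to the degree-d1 part of (dy^b1), its coefficients on
   x^(d1-j) y^j vanish for j >= b1; likewise for T2.  A sum of r terms
   (k_i x1 + k_i s_i y1)^d1 (x2 + t_i y2)^d2 with k_i^d1 = lam_i has
   coefficient C(d1,j) C(d2,k) sum_i lam_i s_i^j t_i^k on x1^(d1-j) y1^j
   x2^(d2-k) y2^k, so it suffices to find weights lam_i and points (s_i, t_i)
   whose moments for j <= d1, k <= d2 are prescribed on the box j < b1, k < b2
   and vanish off it.  With g = gcd(b1, b2), b1 = Q g, b2 = P g, take
   s = eta^c tau^P and t = tau^Q, where eta is a primitive b1-th root of unity,
   c < g, and tau runs over P d1 + Q d2 + 1 distinct values.  Then
   s^j t^k = eta^(c j) tau^(P j + Q k): Vandermonde interpolation in tau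
   prescribes each weighted degree P j + Q k separately, and averaging over c
   separates the monomials of equal weighted degree, whose j are congruent mod Q
   and, inside the box, distinct mod Q g.  This takes
   g (P d1 + Q d2 + 1) = d1 b2 + d2 b1 + g <= d1 b2 + d2 b1 + b1 b2 - 1 terms. *)

Definition bimonom (d j : nat) : 'X_{1..2} :=
  [multinom (if (i : nat) == 0 then d - j else j)%N | i < 2].

Lemma ord2P (i : 'I_2) : i = ord0 \/ i = inord 1.
Proof.
case: i => [[|[|k]] hk]; [left | right | by []]; apply: val_inj => //=.
by rewrite inordK.
Qed.

Lemma mdeg_bivar (m : 'X_{1..2}) : mdeg m = (m ord0 + m (inord 1))%N.
Proof.
rewrite mdegE !big_ord_recl big_ord0 addn0; congr (_ + m _)%N.
by apply: val_inj; rewrite /= inordK.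
Qed.

Lemma bimonom0 d j : bimonom d j ord0 = (d - j)%N.
Proof. by rewrite mnmE. Qed.

Lemma bimonom1 d j : bimonom d j (inord 1) = j.
Proof. by rewrite mnmE inordK. Qed.

Lemma mdeg_bimonom d j : (j <= d)%N -> mdeg (bimonom d j) = d.
Proof. by move=> le_jd; rewrite mdeg_bivar bimonom0 bimonom1 subnK. Qed.

Lemma bimonomE (m : 'X_{1..2}) : m = bimonom (mdeg m) (m (inord 1)).
Proof.
apply/mnmP => i; rewrite mdeg_bivar.
by case: (ord2P i) => ->; rewrite ?bimonom0 ?bimonom1 ?addnK.
Qed.

Lemma dhomog_bivarE (R : nzRingType) d (p : {mpoly R[2]}) : p \is d.-homog ->
  p = \sum_(j < d.+1) p@_(bimonom d j) *: 'X_[bimonom d j].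
Proof.
move=> hom_p; apply/mpolyP => m; rewrite raddf_sum /=.
under eq_bigr => j _ do rewrite mcoeffZ mcoeffX.
have [deg_m | ne_m] := eqVneq (mdeg m) d; last first.
  rewrite (dhomog_nemf_coeff hom_p ne_m) big1 // => j _.
  case: eqP; rewrite ?mulr0 // => m_j.
  by move: ne_m; rewrite -m_j mdeg_bimonom ?eqxx // -ltnS.
have lt_m1 : (m (inord 1) < d.+1)%N by rewrite ltnS -deg_m mdeg_bivar leq_addl.
have Em := bimonomE m; rewrite deg_m in Em.
rewrite (bigD1 (Ordinal lt_m1)) //= -Em eqxx mulr1 big1 ?addr0 //.
move=> j ne_j; case: eqP; rewrite ?mulr0 // => m_j.
by move: ne_j; rewrite -(inj_eq val_inj) /= -m_j bimonom1 eqxx.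
Qed.

Lemma comp_bivar_dhomog (R : comNzRingType) n d (p : {mpoly R[2]})
    (X Y : {mpoly R[n]}) : p \is d.-homog ->
  p \mPo [tuple X; Y] = \sum_(j < d.+1) p@_(bimonom d j) *: (X ^+ (d - j) * Y ^+ j).
Proof.
move=> /dhomog_bivarE {1}->; rewrite raddf_sum; apply: eq_bigr => j _ /=.
rewrite comp_mpolyZ comp_mpolyX !big_ord_recl big_ord0 mulr1 /=.
by rewrite !(tnth_nth 0) !mnmE.
Qed.

Lemma mcoeff0_apolarX (F : fieldType) (m : 'X_{1..2}) (p : {mpoly F[2]}) :
  (apolar 'X_[m] p)@_0 = p@_m *+ \prod_(i < 2) (m i)`!.
Proof.
rewrite /apolar msuppX big_seq1 mcoeffX eqxx scale1r mcoeff_mderivm addm0.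
by under eq_bigr => i _ do rewrite ffactnn.
Qed.

Lemma Zgen_mulX (F : fieldType) d b j : (b <= j <= d)%N ->
  Zgen F b * 'X_[bimonom (d - b) (j - b)] = 'X_[bimonom d j].
Proof.
case/andP=> le_bj le_jd; rewrite /Zgen /vy mpolyXn -mpolyXD; congr 'X_[_].
apply/mnmP => i; rewrite mnmDE mulmnE mnm1E.
case: (ord2P i) => ->; rewrite ?bimonom0 ?bimonom1; last by rewrite eqxx; lia.
have -> : (inord 1 == ord0 :> 'I_2) = false by rewrite -(inj_eq val_inj) /= inordK.
lia.
Qed.

Lemma in_scheme_span_Zgen_coef (F : numFieldType) d b j (p : {mpoly F[2]}) :
  in_scheme_span d (Zgen F b) p -> (b <= j <= d)%N -> p@_(bimonom d j) = 0.
Proof.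
move=> span_p le_bjd; have /andP[_ le_jd] := le_bjd.
have hom : Zgen F b * 'X_[bimonom (d - b) (j - b)] \is d.-homog.
  by rewrite Zgen_mulX // dhomogX; apply/eqP; exact: mdeg_bimonom.
have := congr1 (mcoeff 0) (span_p _ hom).
rewrite Zgen_mulX // mcoeff0_apolarX mcoeff0 => /eqP.
have prod_fact_gt0 : (0 < \prod_(i < 2) (bimonom d j i)`!)%N.
  by apply: prodn_gt0 => i; exact: fact_gt0.
by rewrite mulrn_eq0 eqn0Ngt prod_fact_gt0 => /eqP.
Qed.

Lemma exprD_scale_binomial (R : comNzRingType) (A : comAlgType R) (a b : R) (X Y : A) d :
  (a *: X + b *: Y) ^+ d =
  \sum_(j < d.+1) (a ^+ (d - j) * b ^+ j * 'C(d, j)%:R) *: (X ^+ (d - j) * Y ^+ j).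
Proof.
rewrite exprDn; apply: eq_bigr => j _.
by rewrite !exprZn -scalerAl -scalerAr scalerA -scaler_nat scalerA mulrC.
Qed.

Lemma mulr_sumZ (R : comNzRingType) (A : algType R) (I J : finType)
    (x : I -> R) (y : J -> R) (X : I -> A) (Y : J -> A) :
  (\sum_i x i *: X i) * (\sum_j y j *: Y j) =
  \sum_i \sum_j (x i * y j) *: (X i * Y j).
Proof.
rewrite mulr_suml; apply: eq_bigr => i _; rewrite mulr_sumr; apply: eq_bigr => j _.
by rewrite -scalerAl -scalerAr scalerA.
Qed.

Lemma psym_decomp_of_moments (F : numClosedFieldType) d1 d2 (T1 T2 : {mpoly F[2]})
    (I : finType) (lam s t : I -> F) :
  (0 < d1)%N -> T1 \is d1.-homog -> T2 \is d2.-homog ->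
  (forall j k, (j <= d1)%N -> (k <= d2)%N ->
     (\sum_i lam i * s i ^+ j * t i ^+ k) * ('C(d1, j) * 'C(d2, k))%:R =
     T1@_(bimonom d1 j) * T2@_(bimonom d2 k)) ->
  psym_decomp d1 d2 #|I| (tens T1 T2).
Proof.
move=> d1_gt0 hom1 hom2 moments; pose ka i := d1.-root (lam i).
exists (ka \o enum_val), (fun i => ka (enum_val i) * s (enum_val i)),
  (fun _ => 1), (t \o enum_val).
rewrite -(big_enum_val (fun i => (ka i *: v4 F 0 + (ka i * s i) *: v4 F 1) ^+ d1
   * (1 *: v4 F 2 + t i *: v4 F 3) ^+ d2)) /=.
rewrite /tens /embed1 /embed2 (comp_bivar_dhomog _ _ hom1) (comp_bivar_dhomog _ _ hom2).
under eq_bigr => i _ do rewrite !exprD_scale_binomial mulr_sumZ.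
rewrite mulr_sumZ [RHS]exchange_big; apply: eq_bigr => j _.
rewrite [RHS]exchange_big; apply: eq_bigr => k _ /=.
have le_jd1 : (j <= d1)%N by rewrite -ltnS.
have le_kd2 : (k <= d2)%N by rewrite -ltnS.
rewrite -scaler_suml -moments // mulr_suml; congr (_ *: _); apply: eq_bigr => i _.
have lamE : lam i = ka i ^+ (d1 - j) * ka i ^+ j by rewrite -exprD subnK ?rootCK.
by rewrite lamE natrM exprMn expr1n; ring.
Qed.

Lemma sum_expr_unity (R : idomainType) (z : R) n : z ^+ n = 1 ->
  \sum_(c < n) z ^+ c = if z == 1 then n%:R else 0.
Proof.
move=> zn1; have [-> | ne_z1] := eqVneq z 1.
  by under eq_bigr do rewrite expr1n; rewrite sumr_const card_ord.
apply/eqP; have := subrX1 z n; rewrite zn1 subrr => /esym/eqP.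
by rewrite mulf_eq0 subr_eq0 (negPf ne_z1).
Qed.

Lemma weighted_sum_eq_mod P Q j k j' k' : coprime P Q ->
  (P * j + Q * k = P * j' + Q * k')%N -> j = j' %[mod Q].
Proof.
move=> cPQ E; wlog le_jj' : j k j' k' E / (j <= j')%N => [hwlog|].
  have [le | /ltnW le] := leqP j j'; first exact: hwlog E le.
  exact/esym/(hwlog _ _ _ _ (esym E) le).
have cQP : coprime Q P by rewrite coprime_sym.
apply/eqP; rewrite eq_sym eqn_mod_dvd // -(Gauss_dvdr _ cQP).
have -> : (P * (j' - j) = Q * (k - k'))%N by rewrite !mulnBr; lia.
exact: dvdn_mulr.
Qed.

Lemma weighted_sum_box_inj P Q g j k j0 k0 :
  (j0 < Q * g)%N -> (k0 < P * g)%N -> (P * j0 + Q * k0 = P * j + Q * k)%N ->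
  j = j0 %[mod Q * g] -> j = j0 /\ k = k0.
Proof.
move=> lt_j0 lt_k0 E; rewrite (modn_small lt_j0) => mod_j.
have Ej := divn_eq j (Q * g); rewrite mod_j in Ej.
set m := (j %/ (Q * g))%N in Ej.
have Q_gt0 : (0 < Q)%N by case: (Q) lt_j0.
have Ek0 : (k0 = P * g * m + k)%N.
  by apply/eqP; rewrite -(eqn_pmul2l Q_gt0); apply/eqP; rewrite Ej in E; nia.
have m0 : m = 0%N by nia.
by move: Ek0 Ej; rewrite m0; lia.
Qed.

Lemma prim_root_box_filter (F : fieldType) (eta : F) P Q g j k j0 k0 :
  (Q * g).-primitive_root eta -> coprime P Q ->
  (j0 < Q * g)%N -> (k0 < P * g)%N -> (P * j0 + Q * k0 = P * j + Q * k)%N ->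
  \sum_(c < g) (eta ^+ j / eta ^+ j0) ^+ c =
    if (j == j0) && (k == k0) then g%:R else 0.
Proof.
move=> prim_eta cPQ lt_j0 lt_k0 E.
have g_gt0 : (0 < g)%N by case: (g) lt_k0; rewrite ?muln0.
have etaj0_neq0 : eta ^+ j0 != 0.
  by rewrite expf_neq0 // (prim_root_eq0 prim_eta) -lt0n (leq_ltn_trans _ lt_j0).
have ratio_eq1 : (eta ^+ j / eta ^+ j0 == 1) = (eta ^+ j == eta ^+ j0).
  by rewrite -(inj_eq (mulIf etaj0_neq0)) divfK // mul1r.
rewrite sum_expr_unity; last first.
  have etagj0_neq0 := expf_neq0 g etaj0_neq0.
  apply/eqP; rewrite expr_div_n -(inj_eq (mulIf etagj0_neq0)) divfK // mul1r.
  rewrite -!exprM (eq_prim_root_expr prim_eta).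
  by rewrite -!muln_modl eqn_pmul2r // (weighted_sum_eq_mod cPQ E).
rewrite ratio_eq1 (eq_prim_root_expr prim_eta); congr (if _ then _ else _).
by apply/idP/idP => [/eqP/(weighted_sum_box_inj lt_j0 lt_k0 E) [-> ->] | /andP[/eqP-> _]];
  rewrite ?eqxx.
Qed.

Lemma vandermonde_interpolation (F : fieldType) n (tau : 'I_n -> F) (beta : nat -> F) :
  injective tau -> exists lam : 'I_n -> F,
    forall e, (e < n)%N -> \sum_a lam a * tau a ^+ e = beta e.
Proof.
move=> tau_inj; pose V : 'M[F]_n := Vandermonde n (\row_a tau a).
have V_unit : V \in unitmx.
  rewrite unitmxE det_Vandermonde unitfE; apply/prodf_neq0 => a _.
  apply/prodf_neq0 => a' lt_aa'; rewrite !mxE subr_eq0; apply/eqP => /tau_inj eq_a.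
  by move: lt_aa'; rewrite eq_a ltnn.
pose L := invmx V *m \col_(e < n) beta e.
exists (fun a => L a 0) => e lt_en.
have := congr1 (fun M : 'cV[F]_n => M (Ordinal lt_en) 0)
  (mulKVmx V_unit (\col_(e < n) beta e)).
by rewrite !mxE => <-; apply: eq_bigr => a _; rewrite !mxE mulrC.
Qed.

Lemma prim_root_exists (F : numClosedFieldType) n : (0 < n)%N ->
  exists z : F, n.-primitive_root z.
Proof.
move=> n_gt0; have [r Dp] := closed_field_poly_normal ('X^n - 1 : {poly F}).
rewrite (monicP _) ?monicXnsubC // scale1r in Dp.
have rn1 : all n.-unity_root r by apply/allP => z; rewrite -root_prod_XsubC -Dp.
have sz_r : (n < (size r).+1)%N by rewrite -(size_prod_XsubC r id) -Dp size_XnsubC.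
have [|z] := hasP (has_prim_root n_gt0 rn1 _ sz_r); last by exists z.
by rewrite -separable_prod_XsubC -Dp separable_Xn_sub_1 // pnatr_eq0 -lt0n.
Qed.

Lemma gcdn_cofactors b1 b2 : (0 < b1)%N ->
  let g := gcdn b1 b2 in
  [/\ (0 < g)%N, b1 = b1 %/ g * g, b2 = b2 %/ g * g & coprime (b2 %/ g) (b1 %/ g)]%N.
Proof.
move=> b1_gt0 g; have g_gt0 : (0 < g)%N by rewrite gcdn_gt0 b1_gt0.
have Eb1 : b1 = (b1 %/ g * g)%N by rewrite divnK // dvdn_gcdl.
have Eb2 : b2 = (b2 %/ g * g)%N by rewrite divnK // dvdn_gcdr.
split=> //; apply/eqP/eqP.
by rewrite -(eqn_pmul2r g_gt0) mul1n muln_gcdl -Eb1 -Eb2 gcdnC.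
Qed.

Lemma sum_ord_pred1 (V : nmodType) n i (x : V) :
  \sum_(j < n) (if (j : nat) == i then x else 0) = if (i < n)%N then x else 0.
Proof. by rewrite -big_mkcond big_ord1_eq. Qed.

Lemma sum_ord2_pred1 (V : nmodType) m n i j (x : V) :
  \sum_(a < m) \sum_(b < n) (if ((a : nat) == i) && ((b : nat) == j) then x else 0) =
  if ((i < m) && (j < n))%N then x else 0.
Proof.
have row_sum (a : 'I_m) :
    \sum_(b < n) (if (a == i :> nat) && (b == j :> nat) then x else 0) =
    if (a : nat) == i then (if (j < n)%N then x else 0) else 0.
  by case: eqP => _; [exact: sum_ord_pred1 | exact: big1].
by under eq_bigr do rewrite row_sum; rewrite sum_ord_pred1; case: (i < m)%N.
Qed.

Section BoxFilter.
Variables (F : numFieldType) (P Q g : nat) (phi : nat -> nat -> F) (eta : F).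
Hypotheses (cPQ : coprime P Q) (g_gt0 : (0 < g)%N).
Hypothesis prim_eta : (Q * g).-primitive_root eta.

Definition box_coef (c e : nat) : F :=
  g%:R^-1 * \sum_(j0 < Q * g) \sum_(k0 < P * g)
    (if (P * j0 + Q * k0 == e)%N then phi j0 k0 * (eta ^+ j0)^-1 ^+ c else 0).

Lemma box_coef_filter j k :
  \sum_(c < g) (eta ^+ j) ^+ c * box_coef c (P * j + Q * k) =
  if ((j < Q * g) && (k < P * g))%N then phi j k else 0.
Proof.
rewrite /box_coef; under eq_bigr => c _ do rewrite mulrCA.
rewrite -mulr_sumr; under eq_bigr => c _ do rewrite mulr_sumr.
rewrite exchange_big; under eq_bigr => j0 _.
  under eq_bigr => c _ do rewrite mulr_sumr.
  rewrite exchange_big.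
  over.
have term j0 k0 : (j0 < Q * g)%N -> (k0 < P * g)%N ->
    \sum_(c < g) (eta ^+ j) ^+ c *
      (if (P * j0 + Q * k0 == P * j + Q * k)%N
       then phi j0 k0 * (eta ^+ j0)^-1 ^+ c else 0) =
    if (j0 == j) && (k0 == k) then phi j k * g%:R else 0.
  move=> lt_j0 lt_k0; case: eqP => [E | ne]; last first.
    rewrite big1 => [|c _]; last by rewrite mulr0.
    by case: andP => // [[/eqP ej /eqP ek]]; case: ne; rewrite ej ek.
  under eq_bigr => c _ do rewrite mulrCA -exprMn.
  rewrite -mulr_sumr (prim_root_box_filter prim_eta cPQ lt_j0 lt_k0 E).
  rewrite [j0 == j]eq_sym [k0 == k]eq_sym.
  by case: andP => [[/eqP-> /eqP->] | _]; rewrite ?mulr0.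
under eq_bigr => j0 _.
  by under eq_bigr => k0 _ do rewrite (term _ _ (ltn_ord j0) (ltn_ord k0)); over.
have g_neq0 : g%:R != 0 :> F by rewrite pnatr_eq0 -lt0n.
by rewrite sum_ord2_pred1; case: ifP; rewrite ?mulr0 // mulrC mulfK.
Qed.
End BoxFilter.

Lemma box_moments (F : numClosedFieldType) d1 d2 b1 b2 (phi : nat -> nat -> F) :
  (0 < b1)%N ->
  exists (I : finType) (lam s t : I -> F),
    #|I| = (d1 * b2 + d2 * b1 + gcdn b1 b2)%N /\
    forall j k, (j <= d1)%N -> (k <= d2)%N ->
      \sum_i lam i * s i ^+ j * t i ^+ k =
      if ((j < b1) && (k < b2))%N then phi j k else 0.
Proof.
move=> b1_gt0; have [] := gcdn_cofactors b2 b1_gt0.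
set g := gcdn b1 b2; set P := (b2 %/ g)%N; set Q := (b1 %/ g)%N => g_gt0 Eb1 Eb2 cPQ.
have Qg_gt0 : (0 < Q * g)%N by rewrite -Eb1.
have [eta prim_eta] := prim_root_exists F Qg_gt0.
pose n := (P * d1 + Q * d2).+1.
pose tau (a : 'I_n) : F := a%:R.
have tau_inj : injective tau by move=> a a' /eqP; rewrite eqr_nat => /eqP/val_inj.
have /fin_all_exists [lam Elam] (c : 'I_g) : exists lam : 'I_n -> F,
    forall e, (e < n)%N -> \sum_a lam a * tau a ^+ e = box_coef P Q g phi eta c e.
  exact: vandermonde_interpolation.
exists ('I_g * 'I_n)%type, (fun i => lam i.1 i.2),
  (fun i : 'I_g * 'I_n => eta ^+ i.1 * tau i.2 ^+ P), (fun i => tau i.2 ^+ Q).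
split.
  by rewrite card_prod !card_ord Eb1 Eb2; nia.
move=> j k le_jd1 le_kd2; rewrite Eb1 Eb2 -(box_coef_filter phi cPQ g_gt0 prim_eta).
rewrite -(pair_bigA _ (fun c a =>
  lam c a * (eta ^+ c * tau a ^+ P) ^+ j * (tau a ^+ Q) ^+ k)).
apply: eq_bigr => c _; rewrite -Elam; last first.
  by rewrite ltnS leq_add ?leq_mul2l ?le_jd1 ?le_kd2 ?orbT.
rewrite mulr_sumr; apply: eq_bigr => a _.
by rewrite exprMn [(eta ^+ c) ^+ j]exprAC -!exprM exprD; ring.
Qed.

Unset Implicit Arguments.
Set Strict Implicit.

Theorem proposition3p9 (R : realType) (d1 d2 b1 b2 : nat)
  (T1 T2 : {mpoly R[i][2]}) :
  (2 <= b1)%N -> (b1 * 2 <= d1)%N ->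
  (2 <= b2)%N -> (b2 * 2 <= d2)%N ->
  T1 \is d1.-homog -> T1 != 0 ->
  T2 \is d2.-homog -> T2 != 0 ->
  cactus_rank_eq d1 T1 b1 -> in_scheme_span d1 (Zgen _ b1) T1 ->
  cactus_rank_eq d2 T2 b2 -> in_scheme_span d2 (Zgen _ b2) T2 ->
  psym_rank_le d1 d2 (tens T1 T2) (d1 * b2 + d2 * b1 + b1 * b2 - 1)%N.
Proof.
move=> b1_ge2 le_b1d1 b2_ge2 le_b2d2 hom1 _ hom2 _ _ span1 _ span2.
pose phi j k := T1@_(bimonom d1 j) / 'C(d1, j)%:R * (T2@_(bimonom d2 k) / 'C(d2, k)%:R).
have b1_gt0 : (0 < b1)%N by lia.
have [I [lam [s [t [card_I moments]]]]] := box_moments d1 d2 b2 phi b1_gt0.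
exists #|I|; split.
  by rewrite card_I; have := dvdn_leq b1_gt0 (dvdn_gcdl b1 b2); nia.
apply: (psym_decomp_of_moments (lam := lam) (s := s) (t := t)) => //; first by lia.
move=> j k le_jd1 le_kd2.
rewrite moments //; case: ifP => [_ | /negbT].
  have C_neq0 n m : (m <= n)%N -> 'C(n, m)%:R != 0 :> R[i].
    by rewrite pnatr_eq0 -lt0n bin_gt0.
  by rewrite /phi natrM; field; rewrite !C_neq0.
rewrite negb_and -!leqNgt mul0r => /orP[le_b1j | le_b2k].
  by rewrite (in_scheme_span_Zgen_coef span1) ?le_b1j ?mul0r.
by rewrite (in_scheme_span_Zgen_coef span2) ?le_b2k ?mulr0.
Qed.
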